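(* Let $N=\{1,\dots,n\}$ with $n\ge2$, let $A=\{a_1,\dots,a_k\}$ be finite and $u_1,\dots,u_n:A\to\mathbb{R}$ arbitrary. In the $P^{n-1}\&C$ game defined in the context, (i) every subgame-perfect Nash equilibrium has an outcome $a$ that is efficient, i.e. $\sum_{i=1}^n u_i(a)=\max_{b\in A}\sum_{i=1}^n u_i(b)$, and (ii) every efficient option is the outcome of some subgame-perfect Nash equilibrium.
   Context: Players have quasi-linear utilities $u_i(a)+t_i$. Let $P=\{p\in\mathbb{R}^k:\sum_j p_j=0\}$. The $P^{n-1}\&C$ game: player 1 chooses $p^2\in P$; then for $i=2,\dots,n-1$ in order, player $i$, having observed $p^2,\dots,p^i$, chooses $p^{i+1}\in P$; finally player $n$, having observed $p^2,\dots,p^n$, chooses an option $a\in A$ (the outcome). Then player $n$ pays $p^n(a)$ to player $n-1$, and each player $m\in\{2,\dots,n-1\}$ pays $p^m(a)$ to player $m-1$ while receiving $p^{m+1}(a)$ from player $m+1$. Payoffs: $g_1=u_1(a)+p^2(a)$; $g_m=u_m(a)-p^m(a)+p^{m+1}(a)$ for $2\le m\le n-1$; $g_n=u_n(a)-p^n(a)$. A pure strategy for player $i<n$ maps each history $(p^2,\dots,p^i)$ to an element of $P$; for player $n$ it maps each $(p^2,\dots,p^n)$ to an element of $A$. A subgame-perfect Nash equilibrium is a strategy profile whose restriction to every subgame is a Nash equilibrium of that subgame; its outcome is the option chosen on the path of play. *)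

From HB Require Import structures.
From mathcomp Require Import all_boot all_order all_algebra.
From mathcomp Require Import reals.
Set Implicit Arguments. Unset Strict Implicit. Unset Printing Implicit Defensive.
Import Order.TTheory GRing.Theory Num.Theory.
Local Open Scope ring_scope.

(* Conventions: players are 'I_n, 0-based: player i : 'I_n is player i+1 of
   the paper.  A history is a sequence of price vectors ps = [p^2; ...; p^j],
   i.e. ps`_k = p^(k+2).  Price-setting player j (0-based, j < n-1, i.e. the
   paper's player j+1) moves at histories of size j and chooses p^(j+2).
   A profile consists of  sigma : nat -> seq (A -> R) -> (A -> R)
   (sigma j = strategy of the price-setter j) and  tau : seq (A -> R) -> A
   (strategy of the last player n). *)

Section Game.
Variables (R : realType) (A : finType).

Definition inP (p : A -> R) : Prop := \sum_(x : A) p x = 0.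

Definition hist := seq (A -> R).

Definition zerop : A -> R := fun _ => 0.

Definition valid_hist (h : hist) : Prop :=
  forall k, (k < size h)%N -> inP (nth zerop h k).

(* payoff of player i (0-based) given the full price history ps and outcome a:
   g_i = u_i(a) - p^(i+1)(a) [if i > 0] + p^(i+2)(a) [if i < n-1]. *)
Definition payoff (n : nat) (u : 'I_n -> A -> R) (ps : hist) (a : A)
    (i : 'I_n) : R :=
  u i a - (if (0 < (i : nat))%N then nth zerop ps (i.-1) a else 0)
        + (if (i.+1 < n)%N then nth zerop ps i a else 0).

Fixpoint extend (sigma : nat -> hist -> (A -> R)) (k : nat) (h : hist) : hist :=
  match k with
  | 0 => h
  | k'.+1 => extend sigma k' (rcons h (sigma (size h) h))
  end.

Definition complete (n : nat) (sigma : nat -> hist -> (A -> R)) (h : hist) : hist :=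
  extend sigma (n.-1 - size h) h.

Definition outcome_from (n : nat) sigma (tau : hist -> A) (h : hist) : A :=
  tau (complete n sigma h).

Definition payoff_from (n : nat) (u : 'I_n -> A -> R) sigma tau (h : hist)
    (i : 'I_n) : R :=
  payoff u (complete n sigma h) (outcome_from n sigma tau h) i.

Definition valid_price_strategy (j : nat) (s : hist -> (A -> R)) : Prop :=
  forall h, size h = j -> valid_hist h -> inP (s h).

Definition valid_profile (n : nat) (sigma : nat -> hist -> (A -> R)) : Prop :=
  forall j, (j < n.-1)%N -> valid_price_strategy j (sigma j).

Definition upd (sigma : nat -> hist -> (A -> R)) (j : nat) (s : hist -> (A -> R)) :=
  fun j' => if j' == j then s else sigma j'.

Definition subgame_nash (n : nat) (u : 'I_n -> A -> R) sigma tau (h : hist) : Prop :=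
  (forall (i : 'I_n), (i.+1 < n)%N -> forall s, valid_price_strategy i s ->
     payoff_from u (upd sigma i s) tau h i <= payoff_from u sigma tau h i)
  /\
  (forall (i : 'I_n), (i : nat) = n.-1 -> forall t : hist -> A,
     payoff_from u sigma t h i <= payoff_from u sigma tau h i).

Definition SPNE (n : nat) (u : 'I_n -> A -> R) sigma tau : Prop :=
  valid_profile n sigma /\
  forall h : hist, valid_hist h -> (size h <= n.-1)%N -> subgame_nash u sigma tau h.

Definition outcome (n : nat) sigma tau : A := outcome_from n sigma tau [::].

Definition efficient (n : nat) (u : 'I_n -> A -> R) (a : A) : Prop :=
  forall b : A, \sum_(i < n) u i b <= \sum_(i < n) u i a.

End Game.

(* Write W_j(b) for the welfare of players j, ..., n at option b and
   V_j(b) = W_j(b) - p^j(b) for what player j retains of it.  Player j's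
   payoff is V_j(o) - (W_{j+1}(o) - p^{j+1}(o)).  By backward induction, in
   any subgame-perfect equilibrium the outcome of the subgame where player j
   moves maximizes V_j; at the root V_1 = W_1 is total welfare.  The step:
   since the price vectors sum to zero, max_b (W_{j+1} - p)(b) is at least
   the mean of W_{j+1}, with equality for the centred price p = W_{j+1} - mean.
   If the outcome failed to maximize V_j, player j could offer the centred
   price of W_{j+1} lowered by eps at a better option x, where eps is the gap
   in V_j; that makes x the unique best continuation, and player j gains
   eps / #|A|.  Conversely, when every price-setter posts the centred price
   and player n answers the last deviation from it with a best response (and
   picks the efficient option a if there was none), nobody can gain. *)

From mathcomp Require Import all_boot all_order all_algebra.
From mathcomp Require Import reals.
From mathcomp Require Import lra zify.
Set Implicit Arguments. Unset Strict Implicit. Unset Printing Implicit Defensive.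
Import Order.TTheory GRing.Theory Num.Theory.
Local Open Scope ring_scope.

Section Histories.
Variables (R : realType) (A : finType) (n : nat).
Implicit Types (f : nat -> hist R A -> (A -> R)) (h : hist R A).

Lemma size_extend f k h : size (extend f k h) = (size h + k)%N.
Proof.
elim: k h => [|k IH] h /=; first by rewrite addn0.
by rewrite IH size_rcons addSnnS.
Qed.

Lemma nth_extend f k h m :
  (m < size h)%N -> nth (@zerop R A) (extend f k h) m = nth (@zerop R A) h m.
Proof.
elim: k h => [|k IH] h //= Hm.
rewrite IH ?size_rcons; last exact: ltnW.
by rewrite nth_rcons Hm.
Qed.

Lemma eq_extend f g k h :
  (forall m, (size h <= m)%N -> f m = g m) -> extend f k h = extend g k h.
Proof.
elim: k h => [|k IH] h E //=.
rewrite (E (size h)) //; apply: IH => m; rewrite size_rcons => Hm.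
exact/E/ltnW.
Qed.

Lemma size_complete f h : (size h <= n.-1)%N -> size (complete n f h) = n.-1.
Proof. by move=> H; rewrite /complete size_extend; lia. Qed.

Lemma complete_rcons f h :
  (size h < n.-1)%N -> complete n f h = complete n f (rcons h (f (size h) h)).
Proof.
move=> Hs; rewrite /complete size_rcons.
by have -> : (n.-1 - size h = (n.-1 - (size h).+1).+1)%N by lia.
Qed.

Lemma nth_complete_rcons f h p k : (k <= size h)%N ->
  nth (@zerop R A) (complete n f (rcons h p)) k =
  if k == size h then p else nth (@zerop R A) h k.
Proof.
move=> Hk; rewrite /complete nth_extend ?size_rcons ?ltnS // nth_rcons.
by case: ltngtP Hk; rewrite // leqNgt => ->.
Qed.

Lemma complete_upd f i s h : size h = i -> (i < n.-1)%N ->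
  complete n (upd f i s) h = complete n f (rcons h (s h)).
Proof.
move=> Hs Hi; rewrite complete_rcons ?Hs //.
have -> : upd f i s i h = s h by rewrite /upd eqxx.
apply: eq_extend => m; rewrite size_rcons Hs => Hm.
by rewrite /upd ifN //; apply/eqP; lia.
Qed.

Lemma valid_hist_nil : valid_hist (@nil (A -> R)).
Proof. by []. Qed.

Lemma valid_hist_rcons h p : valid_hist h -> inP p -> valid_hist (rcons h p).
Proof.
move=> Vh Pp k; rewrite size_rcons ltnS leq_eqVlt nth_rcons.
by case/orP=> [/eqP ->|Hk]; [rewrite ltnn eqxx | rewrite Hk; apply: Vh].
Qed.

End Histories.

Section Prices.
Variables (R : realType) (A : finType).
Implicit Types (f p : A -> R).

Definition mean f : R := (\sum_y f y) / #|A|%:R.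

Definition center f : A -> R := fun x => f x - mean f.

Lemma center_inP f : inP (center f).
Proof.
rewrite /inP /center sumrB sumr_const -mulr_natr.
have [A0|A0] := posnP #|A|; last by rewrite divfK ?subrr // pnatr_eq0 -lt0n.
by rewrite A0 mulr0 subr0 big_pred0 // => x; apply: (card0_eq A0).
Qed.

Lemma mean_le_sub_price f p o : inP p ->
  (forall x, f x - p x <= f o - p o) -> mean f <= f o - p o.
Proof.
move=> Pp Ho; have A0 : (0 < #|A|)%N by apply/card_gt0P; exists o.
rewrite ler_pdivrMr ?ltr0n // mulr_natr -sumr_const.
have : \sum_y (f y - p y) <= \sum_(y : A) (f o - p o) by apply: ler_sum.
by rewrite sumrB Pp subr0.
Qed.

Definition bump_price f x e : A -> R :=
  center (fun y => f y - (if y == x then e else 0)).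

Lemma sub_bump_price f x e y :
  f y - bump_price f x e y = mean f - e / #|A|%:R + (if y == x then e else 0).
Proof.
have bump : \sum_y (if y == x then e else 0) = e.
  by rewrite (bigD1 x) //= eqxx big1 ?addr0 // => z /negbTE ->.
rewrite /bump_price /center.
have -> : mean (fun y => f y - (if y == x then e else 0)) = mean f - e / #|A|%:R.
  by rewrite /mean sumrB bump mulrBl.
lra.
Qed.

End Prices.

Section Game.
Variables (R : realType) (A : finType) (n : nat) (u : 'I_n -> A -> R).
Implicit Types (f : nat -> hist R A -> (A -> R)) (tau : hist R A -> A).
Implicit Types (h ps : hist R A).

Definition tail_welfare (j : nat) (b : A) : R := \sum_(i < n | (j <= i)%N) u i b.

(* The price player j pays is p^{j+1} = ps`_(j-1); player 0 pays nothing. *)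
Definition tail_value (j : nat) ps (b : A) : R :=
  tail_welfare j b - (if (0 < j)%N then nth (@zerop R A) ps j.-1 b else 0).

Lemma tail_welfareS (i : 'I_n) b : tail_welfare i b = u i b + tail_welfare i.+1 b.
Proof.
rewrite /tail_welfare (bigD1 i) //=; congr (_ + _); apply: eq_bigl => k.
by rewrite -(inj_eq val_inj) /= andbC eq_sym -ltn_neqAle.
Qed.

Lemma tail_welfare_n b : tail_welfare n b = 0.
Proof. by rewrite /tail_welfare big_pred0 // => k; rewrite leqNgt ltn_ord. Qed.

Lemma tail_value_rcons h p b :
  tail_value (size h).+1 (rcons h p) b = tail_welfare (size h).+1 b - p b.
Proof. by rewrite /tail_value /= nth_rcons ltnn eqxx. Qed.

Lemma tail_value_prefix j ps h b :
  (forall k, (k < size h)%N -> nth (@zerop R A) ps k = nth (@zerop R A) h k) ->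
  (j <= size h)%N -> tail_value j ps b = tail_value j h b.
Proof. by move=> E; rewrite /tail_value; case: j => [|j] //= Hj; rewrite E. Qed.

Lemma payoff_setter ps o (i : 'I_n) : (i.+1 < n)%N ->
  payoff u ps o i =
  tail_value i ps o - (tail_welfare i.+1 o - nth (@zerop R A) ps i o).
Proof.
move=> Hi; rewrite /payoff /tail_value tail_welfareS Hi.
case: (0 < (i : nat))%N; lra.
Qed.

Lemma payoff_last ps o (i : 'I_n) : (i : nat) = n.-1 ->
  payoff u ps o i = tail_value i ps o.
Proof.
move=> Hi; rewrite /payoff /tail_value tail_welfareS.
have Hlt := ltn_ord i; have -> : i.+1 = n by lia.
by rewrite ltnn tail_welfare_n addr0 addr0.
Qed.

Lemma payoff_from_rcons f tau h (i : 'I_n) q :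
  size h = i -> (i.+1 < n)%N ->
  let o := outcome_from n f tau (rcons h q) in
  payoff_from u f tau (rcons h q) i =
  tail_value i h o - (tail_welfare i.+1 o - q o).
Proof.
move=> Hs Hi /=; rewrite /payoff_from payoff_setter // -Hs nth_complete_rcons //.
rewrite eqxx (@tail_value_prefix _ _ h) // => k Hk.
by rewrite nth_complete_rcons ?(ltnW Hk) // (ltn_eqF Hk).
Qed.

Lemma payoff_from_step f tau h :
  (size h < n.-1)%N ->
  payoff_from u f tau h =1 payoff_from u f tau (rcons h (f (size h) h)).
Proof. by move=> Hs i; rewrite /payoff_from /outcome_from -complete_rcons. Qed.

Lemma payoff_from_upd f tau i s h : size h = i -> (i < n.-1)%N ->
  payoff_from u (upd f i s) tau h =1 payoff_from u f tau (rcons h (s h)).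
Proof. by move=> Hs Hi j; rewrite /payoff_from /outcome_from complete_upd. Qed.

Section Necessity.
Variables (f : nat -> hist R A -> (A -> R)) (tau : hist R A -> A).
Hypothesis spne : SPNE u f tau.

Lemma spne_outcome_max_step h : valid_hist h -> (size h < n.-1)%N ->
  let W := tail_welfare (size h).+1 in
  (forall p, inP p -> forall y, let o := outcome_from n f tau (rcons h p) in
     W y - p y <= W o - p o) ->
  forall x, tail_value (size h) h x <= tail_value (size h) h (outcome_from n f tau h).
Proof.
move=> Vh Hj W best_reply x; have [Vf Nash] := spne.
have Hj1 : ((size h).+1 < n)%N by lia.
set ps := f (size h) h; set a1 := outcome_from n f tau (rcons h ps).
have Pps : inP ps := Vf (size h) Hj h erefl Vh.
have -> : outcome_from n f tau h = a1 by rewrite /outcome_from complete_rcons.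
rewrite leNgt; apply/negP => Hgap.
set eps := tail_value (size h) h x - tail_value (size h) h a1.
have eps_gt0 : 0 < eps by rewrite subr_gt0.
set q := bump_price W x eps.
have a2x : outcome_from n f tau (rcons h q) = x.
  apply/eqP/negPn/negP => Hne.
  have /= := best_reply q (center_inP _) x.
  rewrite !sub_bump_price eqxx (negbTE Hne); lra.
have [Nset _] := Nash h Vh (ltnW Hj).
have := Nset (Ordinal (ltnW Hj1)) Hj1 (fun _ => q) (fun _ _ _ => center_inP _).
rewrite payoff_from_upd // (payoff_from_step _ _ Hj) !payoff_from_rcons //.
rewrite -/ps -/a1 a2x /= sub_bump_price eqxx -/W.
have Hmean : mean W <= W a1 - ps a1 by apply: mean_le_sub_price => // y; apply: best_reply.
have Heps : 0 < eps / #|A|%:R.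
  by rewrite divr_gt0 // ltr0n; apply/card_gt0P; exists x.
have eps_def : eps = tail_value (size h) h x - tail_value (size h) h a1 by [].
lra.
Qed.

Lemma spne_outcome_max k h : (0 < n)%N -> valid_hist h -> (size h + k)%N = n.-1 ->
  forall x, tail_value (size h) h x <= tail_value (size h) h (outcome_from n f tau h).
Proof.
move=> n_gt0; elim: k h => [|k IH] h Vh Hs x.
  have Hlt : (n.-1 < n)%N by lia.
  have [_ Nlast] := spne.2 h Vh (eq_leq (etrans (esym (addn0 _)) Hs)).
  have := Nlast (Ordinal Hlt) erefl (fun _ => x).
  rewrite /payoff_from /outcome_from !payoff_last //= -(addn0 (size h)) Hs.
  by rewrite /complete -Hs addn0 subnn.
apply: spne_outcome_max_step => // [|p Pp y /=]; first by lia.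
rewrite -!tail_value_rcons -(size_rcons h p).
by apply: IH; [exact: valid_hist_rcons | rewrite size_rcons; lia].
Qed.

End Necessity.

Definition centered_prices : nat -> hist R A -> (A -> R) :=
  fun j _ => center (tail_welfare j.+1).

Section Sufficiency.
Variable a : A.
Hypothesis efficient_a : efficient u a.

Definition best_reply_to (p : A -> R) (j : nat) : A :=
  [arg max_(b > a) (tail_welfare j b - p b)]%O.

(* [scan ps k] finds the last m < k with ps`_m off the centred price and
   answers it with a maximizer of tail_welfare m.+1 - ps`_m; if there is no
   such m it returns the efficient option a. *)
Fixpoint scan ps (k : nat) : A :=
  if k is k'.+1 then
    if [forall x, nth (@zerop R A) ps k' x == center (tail_welfare k) x]
    then scan ps k'
    else best_reply_to (nth (@zerop R A) ps k') k
  else a.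

Definition last_reply ps : A := scan ps (size ps).

Lemma best_reply_toP p j b :
  tail_welfare j b - p b <= tail_welfare j (best_reply_to p j) - p (best_reply_to p j).
Proof. by rewrite /best_reply_to; case: arg_maxP => //= i _; apply. Qed.

Lemma tail_value_scan ps i x : tail_value i ps x <= tail_value i ps (scan ps i).
Proof.
case: i => [|m]; first by rewrite /tail_value /= !subr0; apply: efficient_a.
rewrite /tail_value /=; case: ifP => [/forallP H|_].
  by rewrite !(eqP (H _)) /center; lra.
exact: best_reply_toP.
Qed.

Lemma eq_scan ps ps' k :
  (forall m, (m < k)%N -> nth (@zerop R A) ps m = nth (@zerop R A) ps' m) ->
  scan ps k = scan ps' k.
Proof. by elim: k => [|k IH] E //=; rewrite E // IH // => m Hm; apply: E; lia. Qed.

Lemma scan_centered ps j k :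
  (forall m, (j <= m < k)%N ->
     nth (@zerop R A) ps m = center (tail_welfare m.+1)) ->
  (j <= k)%N -> scan ps k = scan ps j.
Proof.
elim: k => [|k IH] E Hj; first by have -> : j = 0%N by lia.
have [-> //|Hne] := eqVneq j k.+1.
rewrite /= ifT; last by apply/forallP => x; rewrite E ?eqxx //; lia.
by apply: IH => [m Hm|]; [apply: E | ]; lia.
Qed.

Lemma nth_extend_centered k h m : (size h <= m < size h + k)%N ->
  nth (@zerop R A) (extend centered_prices k h) m = center (tail_welfare m.+1).
Proof.
elim: k h => [|k IH] h Hm; first by lia.
have [->|Hne] := eqVneq m (size h).
  by rewrite /= nth_extend ?size_rcons // nth_rcons ltnn eqxx.
by apply: IH; rewrite size_rcons; lia.
Qed.

Lemma last_reply_complete h : (size h <= n.-1)%N ->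
  outcome_from n centered_prices last_reply h = scan h (size h).
Proof.
move=> Hh; rewrite /outcome_from /last_reply size_complete //.
rewrite (@scan_centered _ (size h)) //.
  by apply: eq_scan => m Hm; rewrite /complete nth_extend.
by move=> m Hm; rewrite /complete nth_extend_centered //; lia.
Qed.

Lemma centered_price_best h (p : A -> R) (i : 'I_n) :
  size h = i -> (i.+1 < n)%N -> inP p ->
  payoff_from u centered_prices last_reply (rcons h p) i <=
  payoff_from u centered_prices last_reply (rcons h (center (tail_welfare i.+1))) i.
Proof.
move=> Hs Hi Pp.
have Hh q : (size (rcons h q) <= n.-1)%N by rewrite size_rcons; lia.
rewrite !payoff_from_rcons // !last_reply_complete // !size_rcons Hs /=.
have scan_h q : scan (rcons h q) i = scan h i.
  by apply: eq_scan => m Hm; rewrite nth_rcons Hs Hm.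
have nth_h q : nth (@zerop R A) (rcons h q) i = q.
  by rewrite nth_rcons Hs ltnn eqxx.
rewrite !nth_h !scan_h.
have -> : [forall x, center (tail_welfare i.+1) x == center (tail_welfare i.+1) x].
  by apply/forallP.
have Hmax := tail_value_scan h i.
case: ifP => [/forallP H|_]; first by rewrite (eqP (H _)) /center; lra.
have Hbr := mean_le_sub_price Pp (fun y => best_reply_toP p i.+1 y).
by have := Hmax (best_reply_to p i.+1); rewrite /center; lra.
Qed.

Lemma centered_prices_nash_setter (i : 'I_n) s : (i.+1 < n)%N ->
  valid_price_strategy i s -> forall k h, valid_hist h -> (size h + k)%N = i ->
  payoff_from u (upd centered_prices i s) last_reply h i <=
  payoff_from u centered_prices last_reply h i.
Proof.
move=> Hi Vs; elim=> [|k IH] h Vh Hs.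
  rewrite addn0 in Hs.
  have Hlt : (size h < n.-1)%N by lia.
  have Hi' : (i < n.-1)%N by lia.
  rewrite (payoff_from_upd _ _ _ Hs Hi') (payoff_from_step _ _ Hlt) /centered_prices Hs.
  by apply: centered_price_best => //; apply: Vs.
have Hlt : (size h < n.-1)%N by lia.
have Hne : size h != i by apply/eqP; lia.
have step := payoff_from_step _ last_reply Hlt.
rewrite step [in X in _ <= X]step {step} /upd (negbTE Hne) -/(upd centered_prices i s).
by apply: IH; [exact/valid_hist_rcons/center_inP | rewrite size_rcons; lia].
Qed.

Lemma centered_prices_SPNE : SPNE u centered_prices last_reply.
Proof.
split=> [j _ h _ _|h Vh Hh]; first exact: center_inP.
split=> [i Hi s Vs|i Hi t].
  have [Hih|Hih] := ltnP i (size h).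
    rewrite /payoff_from /outcome_from /complete (@eq_extend _ _ _ centered_prices) //.
    by move=> m Hm; rewrite /upd ifN //; apply/eqP; lia.
  by apply: (centered_prices_nash_setter Hi Vs (k := i - size h) Vh); lia.
rewrite /payoff_from /outcome_from !payoff_last // /last_reply size_complete //.
by rewrite -Hi; apply: tail_value_scan.
Qed.

Lemma centered_prices_outcome : outcome n centered_prices last_reply = a.
Proof. by rewrite /outcome last_reply_complete. Qed.

End Sufficiency.

End Game.

Theorem proposition2 (R : realType) (A : finType) (n : nat)
    (u : 'I_n -> A -> R) (hn : (2 <= n)%N) :
  (forall (sigma : nat -> hist R A -> (A -> R)) (tau : hist R A -> A),
     SPNE u sigma tau -> efficient u (outcome n sigma tau))
  /\
  (forall a : A, efficient u a ->
     exists (sigma : nat -> hist R A -> (A -> R)) (tau : hist R A -> A),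
       SPNE u sigma tau /\ outcome n sigma tau = a).
Proof.
split=> [sigma tau spne b | a efficient_a].
  have := spne_outcome_max spne (k := n.-1) (h := [::]) (ltnW hn)
    (@valid_hist_nil R A) erefl b.
  by rewrite /tail_value /= !subr0.
exists (centered_prices u), (last_reply u a).
by split; [apply: centered_prices_SPNE | apply: centered_prices_outcome].
Qed.
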